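(* Let $L$ be a finite-dimensional Lie algebra over a field $F$, let $M$ be a maximal subalgebra of $L$ and let $B$ be an ideal of $L$ with $B\subseteq M$. Then $\eta(L/B:M/B)=\eta(L:M)$.
   Context: For a Lie algebra $L$ and a nonzero subalgebra $X$, the strict core $k_L(X)$ is the sum of all ideals of $L$ that are proper subalgebras of $X$ (it is $0$ if there are none). A subalgebra $C$ of $L$ is a completion of a maximal subalgebra $M$ if $C\not\subseteq M$ but every proper subalgebra of $C$ that is an ideal of $L$ is contained in $M$. An ideal completion is a completion that is an ideal of $L$. The ideal index $\eta(L:M)$ is $\dim(C/k_L(C))$ for any ideal completion $C$ of $M$ in $L$ (this is independent of the choice of $C$). *)

From HB Require Import structures.
From mathcomp Require Import all_boot all_algebra.
Set Implicit Arguments. Unset Strict Implicit. Unset Printing Implicit Defensive.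
Import GRing.Theory.
Local Open Scope ring_scope.

Definition is_lie (F : fieldType) (L : vectType F) (br : L -> L -> L) : Prop :=
  [/\ (forall (a : F) (x y z : L), br (a *: x + y) z = a *: br x z + br y z),
      (forall (a : F) (x y z : L), br z (a *: x + y) = a *: br z x + br z y),
      (forall x : L, br x x = 0) &
      (forall x y z : L, br x (br y z) + br y (br z x) + br z (br x y) = 0)].

Section LieDefs.
Variables (F : fieldType) (L : vectType F) (br : L -> L -> L).

Definition subalg (U : {vspace L}) : Prop :=
  forall x y, x \in U -> y \in U -> br x y \in U.

Definition ideal (U : {vspace L}) : Prop :=
  forall x y, x \in U -> br x y \in U.

Definition proper_sub (U X : {vspace L}) : Prop :=
  (U <= X)%VS /\ U != X.

Definition maximal_subalg (M : {vspace L}) : Prop :=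
  [/\ subalg M, M != fullv &
      forall U, subalg U -> (M <= U)%VS -> U = M \/ U = fullv].

(* K is the strict core k_L(X): the sum (least upper bound in the lattice of
   subspaces) of all ideals of L that are proper subalgebras of X
   (0 if there are none). *)
Definition is_strict_core (X K : {vspace L}) : Prop :=
  (forall I, ideal I -> subalg I -> proper_sub I X -> (I <= K)%VS) /\
  (forall W : {vspace L},
     (forall I, ideal I -> subalg I -> proper_sub I X -> (I <= W)%VS) ->
     (K <= W)%VS).

Definition completion (M C : {vspace L}) : Prop :=
  [/\ subalg C, ~~ (C <= M)%VS &
      forall I, subalg I -> proper_sub I C -> ideal I -> (I <= M)%VS].

Definition ideal_completion (M C : {vspace L}) : Prop :=
  completion M C /\ ideal C.

End LieDefs.

(* pi : L -> Q is a surjective Lie homomorphism with kernel B, i.e. Q is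
   (a copy of) the quotient Lie algebra L/B with canonical projection pi. *)
Definition is_quotient_map (F : fieldType) (L Q : vectType F)
  (brL : L -> L -> L) (brQ : Q -> Q -> Q) (B : {vspace L}) (pi : 'Hom(L, Q)) :
  Prop :=
  [/\ forall x y, pi (brL x y) = brQ (pi x) (pi y),
      limg pi = fullv & lker pi = B].

From mathcomp Require Import all_boot all_algebra.
From Stdlib Require Import Classical Lia.
From mathcomp Require Import zify.
Set Implicit Arguments. Unset Strict Implicit. Unset Printing Implicit Defensive.
Import GRing.Theory.
Local Open Scope ring_scope.

(* Let N be the core of M, the largest ideal of L inside M.  The strict core of
   an ideal completion C of M is C :&: N, so eta(L:M) = dim((C + N)/N), and
   (C + N)/N is a chief factor of L not covered by M.  Any two chief factors
   D1/N, D2/N not covered by M have the same dimension: either D1 = D2, or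
   D1 :&: D2 <= N, and then each Di satisfies Di + M = L and Di :&: M = N, so
   dim Di = dim L - dim M + dim N.  Finally B <= N, the image of N is the core
   of M/B, and taking preimages turns chief factors over N/B into chief
   factors over N of the same dimension. *)

Section LieAlgebra.
Variables (F : fieldType) (L : vectType F) (br : L -> L -> L).
Hypothesis lieL : is_lie br.

Lemma lieDl x y z : br (x + y) z = br x z + br y z.
Proof. by have [linl _ _ _] := lieL; have := linl 1 x y z; rewrite !scale1r. Qed.

Lemma lieDr x y z : br z (x + y) = br z x + br z y.
Proof. by have [_ linr _ _] := lieL; have := linr 1 x y z; rewrite !scale1r. Qed.

Lemma lie0l y : br 0 y = 0.
Proof. by apply: (@addrI _ (br 0 y)); rewrite -lieDl !addr0. Qed.

Lemma lie_anti x y : br y x = - br x y.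
Proof.
have [_ _ alt _] := lieL; apply/eqP; rewrite -addr_eq0 addrC.
by have := alt (x + y); rewrite lieDl !lieDr !alt add0r addr0 => ->.
Qed.

Lemma ideal0 : ideal br 0%VS.
Proof. by move=> x y; rewrite !memv0 => /eqP->; rewrite lie0l. Qed.

Lemma ideal_subalg I : ideal br I -> subalg br I.
Proof. by move=> idI x y xI _; apply: idI. Qed.

Lemma idealI I J : ideal br I -> ideal br J -> ideal br (I :&: J)%VS.
Proof. by move=> idI idJ x y; rewrite !memv_cap => /andP[xI xJ]; rewrite idI ?idJ. Qed.

Lemma idealD I J : ideal br I -> ideal br J -> ideal br (I + J)%VS.
Proof.
by move=> idI idJ x y /memv_addP[u uI [v vJ ->]]; rewrite lieDl memv_add ?idI ?idJ.
Qed.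

Lemma subalgD_ideal I S : ideal br I -> subalg br S -> subalg br (I + S)%VS.
Proof.
move=> idI sS x y /memv_addP[u uI [v vS ->]] /memv_addP[u' uI' [v' vS' ->]].
rewrite lieDl !lieDr addrA; apply: memv_add; last exact: sS.
by rewrite -lieDr memvD ?(idI _ _ uI) // lie_anti memvN idI.
Qed.

Definition ideal_core (M N : {vspace L}) : Prop :=
  [/\ ideal br N, (N <= M)%VS & forall I, ideal br I -> (I <= M)%VS -> (I <= N)%VS].

(* D/N is a chief factor of L (or D = N). *)
Definition chief_factor (N D : {vspace L}) : Prop :=
  [/\ ideal br D, (N <= D)%VS &
      forall J, ideal br J -> (N <= J)%VS -> (J <= D)%VS -> (J <= N)%VS \/ (D <= J)%VS].

Lemma exists_ideal_core M : exists N, ideal_core M N.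
Proof.
suff grow n I : ideal br I -> (I <= M)%VS -> (\dim M - \dim I < n)%N ->
    exists N, ideal_core M N.
  by apply: (grow (\dim M).+1 0%VS ideal0 (sub0v _)); rewrite dimv0 subn0.
elim: n I => // n IHn I idI IM ltn.
have [[J [idJ JM JnI]] | noJ] :=
  classic (exists J, [/\ ideal br J, (J <= M)%VS & ~~ (J <= I)%VS]); last first.
  exists I; split => // J idJ JM.
  by apply/negPn/negP => JnI; apply: noJ; exists J.
have IJM : (I + J <= M)%VS by rewrite subv_add IM.
have ltIJ : (\dim I < \dim (I + J))%N.
  by rewrite (ltn_leqif (dimv_leqif_sup (addvSl I J))) subv_add subvv.
apply: (IHn _ (idealD idI idJ) IJM); have := dimvS IJM; lia.
Qed.

Section Completion.
Variables M N C K : {vspace L}.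
Hypotheses (coreN : ideal_core M N) (complC : ideal_completion br M C).

Lemma ideal_completion_core I :
  ideal br I -> (I <= C)%VS -> I != C -> (I <= N)%VS.
Proof.
case: coreN complC => _ _ maxN [[_ _ inM] _] idI IC neIC.
by apply: maxN => //; apply: inM => //; apply: ideal_subalg.
Qed.

Lemma strict_core_completion : is_strict_core br C K -> K = (C :&: N)%VS.
Proof.
case: coreN complC => idN NM _ [[_ CnM _] idC] [inK minK].
apply/eqP; rewrite eqEsubv subv_cap; apply/andP; split; last first.
  apply: inK; [exact: idealI | exact/ideal_subalg/idealI | split; first exact: capvSl].
  apply: contraNneq CnM => eCN; rewrite -eCN.
  exact: subv_trans (capvSr _ _) NM.
apply/andP; split; apply: minK => I idI _ [IC neIC] //.
exact: ideal_completion_core.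
Qed.

Lemma chief_factor_completion : chief_factor N (C + N)%VS.
Proof.
case: coreN complC => idN _ _ [_ idC].
split; [exact: idealD | exact: addvSr |] => J idJ NJ JCN.
have [eJC | neJC] := eqVneq (J :&: C)%VS C.
  by right; rewrite subv_add NJ andbT -eJC capvSl.
have JCN' : (J :&: C <= N)%VS.
  by apply: ideal_completion_core; rewrite ?capvSr //; apply: idealI.
left; apply/subvP => x xJ; have /memv_addP[c cC [n nN def_x]] := subvP JCN x xJ.
have cJ : c \in J by rewrite -[c](addrK n) -def_x memvB // (subvP NJ).
by rewrite def_x memvD // (subvP JCN') // memv_cap cJ.
Qed.

Lemma dim_strict_core_completion : is_strict_core br C K ->
  (\dim C - \dim K = \dim (C + N) - \dim N)%N.
Proof. by move/strict_core_completion->; have := dimv_sum_cap C N; lia. Qed.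

End Completion.

Section MaximalSubalgebra.
Variables M N : {vspace L}.
Hypotheses (maxM : maximal_subalg br M) (coreN : ideal_core M N).

Lemma ideal_addv_max X : ideal br X -> ~~ (X <= M)%VS -> (X + M)%VS = fullv.
Proof.
case: maxM => sM _ maxM' idX XnM.
have [eXM | //] := maxM' _ (subalgD_ideal idX sM) (addvSr X M).
by move: XnM; rewrite -eXM addvSl.
Qed.

Lemma dim_ideal_supplement D E : ideal br D -> ideal br E -> (N <= D)%VS ->
  (D :&: E <= N)%VS -> ~~ (D <= M)%VS -> ~~ (E <= M)%VS ->
  (\dim D + \dim M = \dim (fullv : {vspace L}) + \dim N)%N.
Proof.
case: maxM coreN => sM _ _ [_ NM maxN] idD idE ND DEN DnM EnM.
suff eDM : (D :&: M)%VS = N by rewrite -dimv_sum_cap eDM ideal_addv_max.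
apply/eqP; rewrite eqEsubv subv_cap ND NM !andbT.
apply: maxN; last exact: capvSr.
(* D :&: M is an ideal because L = E + M and [D :&: M, E] <= D :&: E <= N <= M. *)
move=> x y; rewrite memv_cap => /andP[xD xM].
have /memv_addP[e eE [m mM ->]] : y \in (E + M)%VS by rewrite ideal_addv_max ?memvf.
rewrite lieDr memv_cap memvD ?idD //= memvD ?(sM _ _ xM mM) //.
have xeDE : br x e \in (D :&: E)%VS by rewrite memv_cap idD // lie_anti memvN idE.
exact: subvP NM _ (subvP DEN _ xeDE).
Qed.

Lemma dim_chief_factor_max D1 D2 : chief_factor N D1 -> chief_factor N D2 ->
  ~~ (D1 <= M)%VS -> ~~ (D2 <= M)%VS -> \dim D1 = \dim D2.
Proof.
move=> [idD1 ND1 chief1] [idD2 ND2 chief2] D1nM D2nM.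
have [D12N | D12nN] := boolP (D1 :&: D2 <= N)%VS.
  have D21N : (D2 :&: D1 <= N)%VS by rewrite capvC.
  have := dim_ideal_supplement idD1 idD2 ND1 D12N D1nM D2nM.
  have := dim_ideal_supplement idD2 idD1 ND2 D21N D2nM D1nM; lia.
have idD12 := idealI idD1 idD2.
have ND12 : (N <= D1 :&: D2)%VS by rewrite subv_cap ND1.
have [D12N | D1D12] := chief1 _ idD12 ND12 (capvSl _ _); first by rewrite D12N in D12nN.
have [D12N | D2D12] := chief2 _ idD12 ND12 (capvSr _ _); first by rewrite D12N in D12nN.
suff -> : D1 = D2 by [].
apply/eqP; rewrite eqEsubv.
by rewrite (subv_trans D1D12 (capvSr _ _)) (subv_trans D2D12 (capvSl _ _)).
Qed.

End MaximalSubalgebra.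

End LieAlgebra.

Section Quotient.
Variables (F : fieldType) (L Q : vectType F).
Variables (br : L -> L -> L) (brQ : Q -> Q -> Q) (B : {vspace L}) (pi : 'Hom(L, Q)).
Hypothesis quoQ : is_quotient_map br brQ B pi.

Lemma limg_lpreim W : (pi @: (pi @^-1: W))%VS = W.
Proof. by case: quoQ => _ im_pi _; rewrite lpreimK // im_pi subvf. Qed.

Lemma mem_limg_ker X x : (B <= X)%VS -> (pi x \in pi @: X)%VS = (x \in X).
Proof.
case: quoQ => _ _ ker_pi BX; apply/idP/idP; last exact: memv_img.
case/memv_imgP => u uX /eqP; rewrite -subr_eq0 -linearB -memv_ker ker_pi => xuB.
by rewrite -(subrK u x) memvD // (subvP BX).
Qed.

Lemma lpreim_limg X : (B <= X)%VS -> (pi @^-1: (pi @: X))%VS = X.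
Proof.
by move=> BX; apply/vspaceP => x; rewrite -memv_preim mem_limg_ker.
Qed.

Lemma limgS_ker X Y : (B <= Y)%VS -> (pi @: X <= pi @: Y)%VS = (X <= Y)%VS.
Proof.
move=> BY; apply/idP/idP; last exact: limgS.
move/(lpreimS pi); rewrite (lpreim_limg BY); apply: subv_trans.
by apply/subvP => x xX; rewrite -memv_preim memv_img.
Qed.

Lemma ideal_limg I : ideal br I -> ideal brQ (pi @: I)%VS.
Proof.
case: quoQ => hom im_pi _ idI x y /memv_imgP[u uI ->].
have /memv_imgP[v _ ->] : y \in limg pi by rewrite im_pi memvf.
by rewrite -hom memv_img ?idI.
Qed.

Lemma ideal_lpreim W : ideal brQ W -> ideal br (pi @^-1: W)%VS.
Proof. by case: quoQ => hom _ _ idW x y; rewrite -!memv_preim hom => /idW. Qed.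

Lemma ideal_core_limg M N : ideal_core br M N -> (B <= N)%VS ->
  ideal_core brQ (pi @: M)%VS (pi @: N)%VS.
Proof.
move=> [idN NM maxN] BN; split; [exact: ideal_limg | exact: limgS |].
move=> I idI IM; rewrite -(limg_lpreim I) limgS // maxN //; first exact: ideal_lpreim.
by rewrite -(limgS_ker _ (subv_trans BN NM)) limg_lpreim.
Qed.

Lemma chief_factor_lpreim N D : (B <= N)%VS ->
  chief_factor brQ (pi @: N)%VS D -> chief_factor br N (pi @^-1: D)%VS.
Proof.
move=> BN [idD ND chiefD]; split; first exact: ideal_lpreim.
  by rewrite -(lpreim_limg BN) lpreimS.
move=> J idJ NJ JD.
have BJ := subv_trans BN NJ.
have JD' : (pi @: J <= D)%VS by rewrite -(limg_lpreim D) limgS.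
have [JN | DJ] := chiefD _ (ideal_limg idJ) (limgS pi NJ) JD'.
  by left; rewrite -(limgS_ker _ BN).
by right; rewrite -(lpreim_limg BJ) lpreimS.
Qed.

Lemma dim_ker_limg X : (B <= X)%VS -> \dim X = (\dim B + \dim (pi @: X))%N.
Proof.
by case: quoQ => _ _ ker_pi BX; rewrite -{1}(limg_ker_dim pi X) ker_pi (capv_idPr BX).
Qed.

End Quotient.

Theorem corollary2p4 (F : fieldType) (L : vectType F) (br : L -> L -> L)
  (M B : {vspace L}) (Q : vectType F) (brQ : Q -> Q -> Q) (pi : 'Hom(L, Q)) :
  is_lie br -> maximal_subalg br M -> ideal br B -> (B <= M)%VS ->
  is_lie brQ -> is_quotient_map br brQ B pi ->
  (* eta(L/B : M/B) = eta(L : M), for any choices of the ideal completions *)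
  forall (C K : {vspace L}) (C' K' : {vspace Q}),
    ideal_completion br M C -> is_strict_core br C K ->
    ideal_completion brQ (pi @: M)%VS C' -> is_strict_core brQ C' K' ->
    (\dim C' - \dim K')%N = (\dim C - \dim K)%N.
Proof.
move=> lieL maxM idB BM lieQ quoQ C K C' K' complC coreK complC' coreK'.
have [N coreN] := exists_ideal_core lieL M.
have BN : (B <= N)%VS by case: coreN => _ _ maxN; apply: maxN.
have coreNQ := ideal_core_limg quoQ coreN BN.
set D := (pi @^-1: (C' + pi @: N))%VS.
have chiefD : chief_factor br N D.
  exact/(chief_factor_lpreim quoQ BN)/(chief_factor_completion lieQ coreNQ).
have [[_ CnM _] _] := complC.
have [[_ C'nM _] _] := complC'.
have DnM : ~~ (D <= M)%VS.
  move: C'nM; apply: contra => DM; apply: subv_trans (addvSl C' (pi @: N)) _.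
  by rewrite -(limg_lpreim quoQ (C' + _)) limgS.
have CNnM : ~~ (C + N <= M)%VS.
  by move: CnM; apply: contra; apply: subv_trans; apply: addvSl.
have eqD := dim_chief_factor_max lieL maxM coreN
  (chief_factor_completion lieL coreN complC) chiefD CNnM DnM.
have [_ ND _] := chiefD.
rewrite (dim_strict_core_completion coreN complC coreK).
rewrite (dim_strict_core_completion coreNQ complC' coreK').
rewrite eqD (dim_ker_limg quoQ (subv_trans BN ND)) (limg_lpreim quoQ).
rewrite (dim_ker_limg quoQ BN); lia.
Qed.
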